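(* For any $u\equiv 4,8\pmod{12}$ and $v\equiv 2,4\pmod 6$, there is no perfect 2-D $(u\times v,4,2)$-OOC.
   Context: A 2-D $(u\times v,4,2)$-OOC is a family $\mathcal C$ of $u\times v$ $(0,1)$-matrices of Hamming weight $4$ such that for all $A=(a_{ij}),B=(b_{ij})\in\mathcal C$ and integers $r$ with $A\ne B$ or $r\not\equiv0\pmod v$, $\sum_{i,j}a_{ij}b_{i,j+r}\le 2$ (column indices mod $v$). It is perfect if it has exactly $u(uv-1)(uv-2)/24$ codewords (equivalently, the cyclic column shifts of its codewords' supports cover each $3$-subset of $I_u\times Z_v$ exactly once). *)

From mathcomp Require Import all_boot.
Set Implicit Arguments. Unset Strict Implicit. Unset Printing Implicit Defensive.

(* A u x v (0,1)-matrix is represented by its support, a subset of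
   I_u x Z_v (rows 'I_u, columns 'I_v read modulo v). *)
Definition matrix01 (u v : nat) := {set 'I_u * 'I_v}.

Definition hweight u v (A : matrix01 u v) : nat := #|A|.

(* sum_{i,j} a_{ij} b_{i,j+r}, column index j+r taken mod v. *)
Definition corr u v (A B : matrix01 u v) (r : nat) : nat :=
  #|[set x in A | [exists y in B, (y.1 == x.1) && (nat_of_ord y.2 == (x.2 + r) %% v)]]|.

(* 2-D (u x v, 4, 2)-OOC.  Shifts r range over nat, which covers all
   residues mod v. *)
Definition is_OOC_4_2 u v (C : {set matrix01 u v}) : Prop :=
  (forall A, A \in C -> hweight A = 4) /\
  (forall A B r, A \in C -> B \in C -> (A != B) || (r %% v != 0) ->
     corr A B r <= 2).

Definition perfect_OOC_4_2 u v (C : {set matrix01 u v}) : Prop :=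
  is_OOC_4_2 C /\ #|C| = u * (u * v - 1) * (u * v - 2) %/ 24.

From mathcomp Require Import all_boot ssralg zmodp zify ring.
Set Implicit Arguments. Unset Strict Implicit. Unset Printing Implicit Defensive.
Import GRing.Theory.

(* Write v = n.+1 and let Z_v act on the points I_u x Z_v by shifting columns.
   The "blocks" of a code C are the translates s + A (A in C, s in Z_v).  The
   OOC condition says that two distinct blocks share at most two points, so
   every 3-subset of points lies in at most one block.  Double counting the
   incidences (triple, block) gives 4 |C| v of them; under the congruence
   hypotheses the perfect cardinality makes this exactly 'C(uv, 3), so every
   triple lies in exactly one block.  Consequently every pair of points lies
   in exactly (uv - 2) / 2 blocks.  Now take an antipodal pair
   P = {x, x + v/2}: shifting by v/2 swaps the two points of P, so it acts as
   a fixed-point-free involution on the blocks containing P, whose number is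
   therefore even.  Hence uv = 2 (mod 4), contradicting 4 | u. *)

Lemma fpf_involution_even (T : finType) (f : T -> T) (S : {set T}) :
  involutive f -> (forall x, f x != x) -> {in S, forall x, f x \in S} ->
  ~~ odd #|S|.
Proof.
move=> fK f_fpf; move: {2}#|S| (leqnn #|S|) => k.
elim: k S => [|k IH] S leSk stableS; first by move: leSk; rewrite leqn0 => /eqP ->.
have [-> | [x xS]] := set_0Vmem S; first by rewrite cards0.
pose S' := S :\: [set x; f x].
have fxS : f x \in S := stableS x xS.
have cardS : #|S| = #|S'| + 2.
  have pairS : [set x; f x] \subset S by rewrite subUset !sub1set xS fxS.
  by rewrite -(cardsID [set x; f x] S) (setIidPr pairS) cards2 eq_sym f_fpf addnC.
have stableS' : {in S', forall y, f y \in S'}.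
  move=> y; rewrite /S' !inE negb_or => /andP [/andP [yx yfx] yS].
  rewrite stableS // andbT negb_or; apply/andP; split.
    by apply: contra yfx => /eqP <-; rewrite fK.
  by apply: contra yx => /eqP /(can_inj fK) ->.
rewrite cardS addn2 /= negbK; apply: IH stableS'.
by move: leSk; rewrite cardS; lia.
Qed.

Lemma sum_le1_eq_card (I : finType) (P : pred I) (f : I -> nat) :
  (forall i, P i -> f i <= 1) -> \sum_(i | P i) f i = #|P| ->
  forall i, P i -> f i = 1.
Proof.
move=> le1 sumE i Pi.
have [_] : \sum_(j | P j) f j <= \sum_(j | P j) 1 ?= iff [forall (j | P j), f j == 1].
  by apply: leqif_sum => j Pj; split; [exact: le1 | ].
by rewrite sumE sum1_card eqxx => /esym /forallP /(_ i) /implyP /(_ Pi) /eqP.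
Qed.

Lemma sum_indicator (I : finType) (P b : pred I) :
  \sum_(i | P i) (b i : nat) = #|[set i | P i & b i]|.
Proof.
rewrite -sum1_card big_mkcond [RHS]big_mkcond /=; apply: eq_bigr => i _.
by rewrite !inE; case: (P i); case: (b i).
Qed.

Section CyclicShifts.

Variables u n : nat.
Local Notation point := ('I_u * 'I_n.+1)%type.

Definition shift (s : 'I_n.+1) (x : point) : point := (x.1, (x.2 + s)%R).

Definition translate (s : 'I_n.+1) (A : {set point}) : {set point} := shift s @: A.

Lemma shiftK s : cancel (shift s) (shift (- s)%R).
Proof. by case=> a b; rewrite /shift /= addrK. Qed.

Lemma shift_inj s : injective (shift s).
Proof. exact: can_inj (shiftK s). Qed.

Lemma shiftD s t x : shift s (shift t x) = shift (t + s)%R x.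
Proof. by rewrite /shift /= addrA. Qed.

Lemma shift0 x : shift 0%R x = x.
Proof. by case: x => a b; rewrite /shift /= addr0. Qed.

Lemma translateD s t (A : {set point}) :
  translate s (translate t A) = translate (t + s)%R A.
Proof. by rewrite /translate -imset_comp; apply: eq_imset => y; apply: shiftD. Qed.

Lemma translate0 (A : {set point}) : translate 0%R A = A.
Proof. by rewrite /translate (eq_imset _ shift0) imset_id. Qed.

Lemma card_translate s (A : {set point}) : #|translate s A| = #|A|.
Proof. exact/card_imset/shift_inj. Qed.

Lemma translateI s (A B : {set point}) :
  translate s (A :&: B) = translate s A :&: translate s B.
Proof. by apply: imsetI => x y _ _; apply: shift_inj. Qed.

Lemma mem_translate s (A : {set point}) x : (shift s x \in translate s A) = (x \in A).
Proof. exact/mem_imset/shift_inj. Qed.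

Lemma corrE (A B : {set point}) r : corr A B r = #|translate (inZp r) A :&: B|.
Proof.
have shiftE x : (nat_of_ord (shift (inZp r) x).2) = (x.2 + r) %% n.+1.
  by rewrite /= modnDmr.
rewrite /corr -(card_imset _ (@shift_inj (inZp r))); apply: eq_card => y.
rewrite !inE; apply/imsetP/andP.
  move=> [x /[!inE] /andP [xA /existsP [z /and3P [zB /eqP z1 /eqP z2]]] ->].
  split; first by rewrite mem_translate.
  suff -> : shift (inZp r) x = z by [].
  by case: z zB z1 z2 => a b _ /= -> z2; congr pair; apply: val_inj; rewrite /= z2 modnDmr.
move=> [/imsetP [x xA ->] yB]; exists x => //.
rewrite inE xA; apply/existsP; exists (shift (inZp r) x).
by rewrite yB eqxx /=; apply/eqP; apply: shiftE.
Qed.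

End CyclicShifts.

Section Blocks.

Variables (u n : nat) (C : {set matrix01 u n.+1}).
Hypothesis C_OOC : is_OOC_4_2 C.
Local Notation point := ('I_u * 'I_n.+1)%type.
Local Notation index := ({set point} * 'I_n.+1)%type.

Definition blocks : {set index} := setX C setT.
Definition block (j : index) : {set point} := translate j.2 j.1.

Definition blocks_over (T : {set point}) : {set index} :=
  [set j in blocks | T \subset block j].

Lemma card_block j : j \in blocks -> #|block j| = 4.
Proof.
case: C_OOC => weight4 _; rewrite inE => /andP [jC _].
by rewrite card_translate; exact: weight4.
Qed.

Lemma card_blocks : #|blocks| = #|C| * n.+1.
Proof. by rewrite cardsX cardsT card_ord. Qed.

Lemma blocks_meet_le2 j k : j \in blocks -> k \in blocks ->
  3 <= #|block j :&: block k| -> j = k.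
Proof.
case: j k => A s [B t]; rewrite !inE /block /= !andbT => AC BC meet3.
case: C_OOC => _ corr_le2.
have corr3 : 3 <= corr A B (s - t)%R.
  rewrite corrE valZpK.
  by rewrite -(card_translate (- t)%R) translateI !translateD subrr translate0 in meet3.
have [eqAB | neqAB] := eqVneq A B; last first.
  by have := corr_le2 A B (s - t)%R AC BC; rewrite neqAB => /(_ isT); lia.
have [-> | neqst] := eqVneq s t; first by rewrite eqAB.
have shift_nz : nat_of_ord (s - t)%R %% n.+1 != 0.
  by rewrite modn_small // -[_ != 0]/((s - t)%R != 0%R) subr_eq0.
by have := corr_le2 A B (s - t)%R AC BC; rewrite shift_nz orbT => /(_ isT); lia.
Qed.

Lemma blocks_over_triple_le1 (T : {set point}) : #|T| = 3 -> #|blocks_over T| <= 1.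
Proof.
move=> cardT; apply/card_le1_eqP => j k /setIdP [jB Tj] /setIdP [kB Tk].
apply: blocks_meet_le2 => //; apply: (leq_trans _ (subset_leq_card (_ : T \subset _))).
  by rewrite cardT.
by rewrite subsetI Tj Tk.
Qed.

(* Each block contains 'C(4, 3) = 4 triples. *)
Lemma sum_blocks_over_triples :
  \sum_(T : {set point} | #|T| == 3) #|blocks_over T| = 4 * #|blocks|.
Proof.
under eq_bigr => T _ do rewrite -sum_indicator.
rewrite exchange_big /= mulnC -sum_nat_const; apply: eq_bigr => j jB.
rewrite sum_indicator -[4]/'C(4, 3) -(card_block jB) -cards_draws.
by apply: eq_card => T; rewrite !inE andbC.
Qed.

Lemma triple_in_one_block (T : {set point}) :
  4 * #|blocks| = 'C(u * n.+1, 3) -> #|T| = 3 -> #|blocks_over T| = 1.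
Proof.
move=> tight cardT.
apply: (@sum_le1_eq_card _ (fun T' : {set point} => #|T'| == 3) (fun T' => #|blocks_over T'|)).
- by move=> T' /eqP; apply: blocks_over_triple_le1.
- have card_points : u * n.+1 = #|{: point}| by rewrite card_prod !card_ord.
  rewrite sum_blocks_over_triples tight card_points -card_draws.
  by apply: eq_card => T'; rewrite inE.
- by rewrite /= cardT.
Qed.

Lemma pair_block_count (P : {set point}) :
  4 * #|blocks| = 'C(u * n.+1, 3) -> #|P| = 2 ->
  2 * #|blocks_over P| = #|~: P|.
Proof.
move=> tight cardP.
rewrite -[RHS]sum1_card (eq_bigr (fun z => #|blocks_over (z |: P)|)); last first.
  by move=> z; rewrite inE => zP; rewrite triple_in_one_block // cardsU1 zP cardP.
under eq_bigr => z _ do rewrite -sum_indicator.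
rewrite exchange_big /= -sum_indicator big_distrr /=; apply: eq_bigr => j jB.
rewrite sum_indicator; have [Pj | notPj] := boolP (P \subset block j); last first.
  apply/esym/eqP; rewrite muln0 cards_eq0; apply/eqP/setP => z.
  by rewrite !inE subUset (negbTE notPj) !andbF.
rewrite muln1 (_ : [set _ in _ | _] = block j :\: P).
  by rewrite cardsD (setIidPr Pj) card_block // cardP.
by apply/setP => z; rewrite !inE subUset sub1set Pj andbT andbC.
Qed.

(* If shifting by h swaps the two points of P, then shifting blocks by h is a
   fixed-point-free involution on the blocks over P, so there is an even number
   of them. *)
Lemma antipodal_pair_even (h : 'I_n.+1) (x : point) :
  (h + h = 0)%R -> h != 0%R -> ~~ odd #|blocks_over [set x; shift h x]|.
Proof.
move=> hh h0; set P := [set x; shift h x].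
pose g (j : index) : index := (j.1, (j.2 + h)%R).
apply: (@fpf_involution_even _ g).
- by case=> A s; rewrite /g /= -addrA hh addr0.
- by case=> A s; rewrite /g xpair_eqE eqxx /= -subr_eq0 addrAC subrr add0r.
have swapP : translate h P = P.
  by rewrite /translate imsetU !imset_set1 shiftD hh shift0 setUC.
move=> [A s]; rewrite !inE /block /= => /andP [/andP [AC _] Ps].
by rewrite AC /= -translateD -swapP imsetS.
Qed.

End Blocks.

Lemma bin3_mul6 N : 'C(N, 3) * 6 = N * (N - 1) * (N - 2).
Proof. by rewrite -[6]/(3`!) bin_ffact !ffactnS ffactn0 muln1 mulnA subn1 subn2. Qed.

Lemma perfect_card_divisible u v :
  (u %% 12 == 4) || (u %% 12 == 8) -> (v %% 6 == 2) || (v %% 6 == 4) ->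
  24 %| u * (u * v - 1) * (u * v - 2).
Proof.
move=> hu hv.
have u4 : 4 %| u by case/orP: hu => /eqP; lia.
have uv3 : ~~ (3 %| u * v).
  by rewrite Euclid_dvdM // negb_or; case/orP: hu => /eqP hu; case/orP: hv => /eqP hv; lia.
have d8 : 8 %| u * (u * v - 2).
  by apply: (@dvdn_mul 4 2) => //; rewrite dvdn_sub // dvdn_mulr // (dvdn_trans _ u4).
have d3 : 3 %| (u * v - 1) * (u * v - 2).
  have [r1 | r2] : u * v %% 3 = 1 \/ u * v %% 3 = 2 by lia.
    by apply: dvdn_mulr; lia.
  by apply: dvdn_mull; lia.
rewrite (_ : 24 = 8 * 3) // Gauss_dvd //.
apply/andP; split; first by rewrite mulnAC dvdn_mulr.
by rewrite -mulnA dvdn_mull.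
Qed.

(* A code of the perfect cardinality yields exactly 'C(uv, 3) triple incidences
   (4 triples in each of its |C| v blocks). *)
Lemma perfect_card_tight u v :
  24 %| u * (u * v - 1) * (u * v - 2) ->
  4 * (u * (u * v - 1) * (u * v - 2) %/ 24 * v) = 'C(u * v, 3).
Proof.
move=> d24; apply/eqP; rewrite -(eqn_pmul2r (_ : 0 < 6)) // bin3_mul6.
set q := _ %/ 24; have q24 : q * 24 = u * (u * v - 1) * (u * v - 2) by rewrite divnK.
have -> : 4 * (q * v) * 6 = q * 24 * v by ring.
by rewrite q24; apply/eqP; ring.
Qed.

Lemma half_turn n : ~~ odd n.+1 -> exists h : 'I_n.+1, (h + h = 0)%R /\ h != 0%R.
Proof.
move=> v_even; have h_lt : n.+1 %/ 2 < n.+1 by rewrite ltn_Pdiv.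
exists (Ordinal h_lt); split; last by rewrite -(inj_eq val_inj) /=; lia.
by apply: val_inj; rewrite /= addnn -muln2 divnK ?modnn // dvdn2.
Qed.

Theorem corollary5p5 (u v : nat) :
  (u %% 12 == 4) || (u %% 12 == 8) ->
  (v %% 6 == 2) || (v %% 6 == 4) ->
  ~ (exists C : {set matrix01 u v}, perfect_OOC_4_2 C).
Proof.
move=> hu hv [C [C_OOC cardC]].
case: v hv C C_OOC cardC => [// | n] hv C C_OOC cardC.
have tight : 4 * #|blocks C| = 'C(u * n.+1, 3).
  by rewrite card_blocks cardC perfect_card_tight // perfect_card_divisible.
have u_pos : 0 < u by case/orP: hu => /eqP; lia.
have u4 : 4 %| u by case/orP: hu => /eqP; lia.
have v_even : ~~ odd n.+1 by case/orP: hv => /eqP; lia.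
have [h [hh h0]] := half_turn v_even.
pose x : 'I_u * 'I_n.+1 := (Ordinal u_pos, 0%R).
have x_shift : x != shift h x.
  by rewrite xpair_eqE negb_and /= add0r eq_sym.
have pair2 : #|[set x; shift h x]| = 2 by rewrite cards2 x_shift.
have pair_count := pair_block_count C_OOC tight pair2.
have pair_even := antipodal_pair_even C x hh h0; rewrite -dvdn2 in pair_even.
have uv4 : 4 %| u * n.+1 by apply: dvdn_mulr.
have := cardsC [set x; shift h x]; rewrite card_prod !card_ord pair2 -pair_count.
by case/dvdnP: pair_even => k ->; lia.
Qed.
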